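(* Let $E(\lambda,\eta,\xi)$ be analytic in a neighborhood of $0\in\mathbb{C}^3$ with Taylor coefficients $a_{(i,j,k)}\in(\sqrt{-1})^{j+k}\mathbb{R}$, such that $E(\lambda,-\eta,\xi)=E(\lambda,\eta,\xi)$, $E(0,0,\xi)\equiv0$, $a_{(1,0,0)}=0$, $a_{(2,0,0)}\ne0$, $a_{(0,2,0)}\ne0$. Write near the origin $E=Wh$ with $h(0,0,0)\ne0$ and $W(\lambda;\eta,\xi)=\lambda^2+b(\eta,\xi)\lambda+c(\eta,\xi)$, $b=b_{01}\xi+b_{02}\xi^2+b_{20}\eta^2+O(|\eta|+|\xi|)^3$, $c=\eta^2(c_{20}+c_{21}\xi+O(|\eta|+|\xi|)^2)$, and assume $c_{20}>0$. Define ${\rm ind}_1=b_{02}$, ${\rm ind}_2=b_{20}$, ${\rm ind}_3=c_{21}^2(b_{01}^2b_{20}^2-2b_{01}b_{20}c_{21}+4b_{02}b_{20}c_{20}+c_{21}^2)$, ${\rm ind}_4=-b_{01}b_{20}c_{21}+2b_{02}b_{20}c_{20}+c_{21}^2$, ${\rm ind}_5=-b_{01}c_{21}+b_{02}c_{20}$. Suppose one of: (i) ${\rm ind}_1<0$ or ${\rm ind}_2<0$; (ii) ${\rm ind}_1>0$, ${\rm ind}_2>0$, ${\rm ind}_3>0$ and ${\rm ind}_4\le0$; (iii) ${\rm ind}_1>0$, ${\rm ind}_2>0$, ${\rm ind}_3>0$ and ${\rm ind}_5<0$. Then for every $r>0$ there exist real $(\eta,\xi)$ with $0<|\eta|+|\xi|<r$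 and a root $\lambda$ of $W(\cdot;\eta,\xi)$ (a zero of $E(\cdot,\eta,\xi)$ near $0$) with $\Re\lambda>0$.
   Context: In the paper, $E$ is the periodic Evans–Lopatinsky determinant of a planar roll wave of the inviscid Saint-Venant equations, and the conclusion is low-frequency spectral instability. Under the hypotheses, $b_{02},b_{20},c_{20}\in\mathbb{R}$ and $b_{01},c_{21}\in i\mathbb{R}$, so the indices are real. *)

From HB Require Import structures.
From mathcomp Require Import all_boot all_order all_algebra.
From mathcomp Require Import reals.
From mathcomp Require Import complex.
Set Implicit Arguments. Unset Strict Implicit. Unset Printing Implicit Defensive.
Import Order.TTheory GRing.Theory Num.Theory.
Local Open Scope ring_scope.

Definition iC (R : realType) : R[i] := Complex 0 1.

Definition cvgC (R : realType) (s : nat -> R[i]) (l : R[i]) : Prop :=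
  forall e : R[i], 0 < e -> exists N : nat, forall n : nat, (N <= n)%N -> `|s n - l| < e.

Definition ps3 (R : realType) (a : nat -> nat -> nat -> R[i]) (N : nat) (x y z : R[i]) : R[i] :=
  \sum_(i < N) \sum_(j < N) \sum_(k < N) a i j k * x ^+ i * y ^+ j * z ^+ k.
Definition abs3 (R : realType) (a : nat -> nat -> nat -> R[i]) (N : nat) (x y z : R[i]) : R[i] :=
  \sum_(i < N) \sum_(j < N) \sum_(k < N) `|a i j k| * `|x| ^+ i * `|y| ^+ j * `|z| ^+ k.

(* f is analytic on the polydisc of radius rho around 0 in C^3, with Taylor
   coefficients a: the power series converges absolutely there and sums to f *)
Definition has_ps3 (R : realType) (a : nat -> nat -> nat -> R[i])
  (f : R[i] -> R[i] -> R[i] -> R[i]) (rho : R[i]) : Prop :=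
  0 < rho /\
  forall x y z : R[i], `|x| < rho -> `|y| < rho -> `|z| < rho ->
    (exists M : R[i], forall N : nat, abs3 a N x y z <= M) /\
    cvgC (fun N => ps3 a N x y z) (f x y z).

Definition ps2 (R : realType) (a : nat -> nat -> R[i]) (N : nat) (x y : R[i]) : R[i] :=
  \sum_(j < N) \sum_(k < N) a j k * x ^+ j * y ^+ k.
Definition abs2 (R : realType) (a : nat -> nat -> R[i]) (N : nat) (x y : R[i]) : R[i] :=
  \sum_(j < N) \sum_(k < N) `|a j k| * `|x| ^+ j * `|y| ^+ k.
Definition has_ps2 (R : realType) (a : nat -> nat -> R[i])
  (f : R[i] -> R[i] -> R[i]) (rho : R[i]) : Prop :=
  0 < rho /\
  forall x y : R[i], `|x| < rho -> `|y| < rho ->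
    (exists M : R[i], forall N : nat, abs2 a N x y <= M) /\
    cvgC (fun N => ps2 a N x y) (f x y).

Definition Wpoly (R : realType) (b c : R[i] -> R[i] -> R[i]) (l eta xi : R[i]) : R[i] :=
  l ^+ 2 + b eta xi * l + c eta xi.

Definition ind1 (R : realType) (b01 b02 b20 c20 c21 : R[i]) : R[i] := b02.
Definition ind2 (R : realType) (b01 b02 b20 c20 c21 : R[i]) : R[i] := b20.
Definition ind3 (R : realType) (b01 b02 b20 c20 c21 : R[i]) : R[i] :=
  c21 ^+ 2 * (b01 ^+ 2 * b20 ^+ 2 - 2 * b01 * b20 * c21 + 4 * b02 * b20 * c20 + c21 ^+ 2).
Definition ind4 (R : realType) (b01 b02 b20 c20 c21 : R[i]) : R[i] :=
  - b01 * b20 * c21 + 2 * b02 * b20 * c20 + c21 ^+ 2.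
Definition ind5 (R : realType) (b01 b02 b20 c20 c21 : R[i]) : R[i] :=
  - b01 * c21 + b02 * c20.

From HB Require Import structures.
From mathcomp Require Import all_boot all_order all_algebra.
From mathcomp Require Import reals.
From mathcomp Require Import complex.
From mathcomp Require Import ring lra.
Import Order.TTheory GRing.Theory Num.Theory.
Local Open Scope ring_scope.
Local Open Scope complex_scope.

(* Only the Taylor data of b and c enter.  Restricted to a real line
   (eta, xi) = (t X, t Y), t -> 0+, the power series of b and c agree up to
   O(t^3), resp. O(t^4), with polynomials in t whose coefficients are built
   from b01, b02, b20, c20, c21.  A root of l^2 + b l + c has positive real
   part as soon as Re b < 0 or the Hurwitz determinant
   (Re b)^2 Re c + Re b Im b Im c - (Im c)^2 is negative.  On the xi-axis
   Re b = Re b01 t + Re b02 t^2 + O(t^3), on the eta-axis Re b = Re b20 t^2 + O(t^3),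
   which handles Re b01 <> 0 and case (i).  On the line eta = sqrt m xi the
   Hurwitz determinant is t^6 m (c20 b20^2 m^2 + ind4 m + b02 ind5) + O(t^7),
   and each of (ii), (iii) makes this quadratic in m negative at some m > 0
   (ind3 is its discriminant).
   The hypotheses on E and on the factorization are not needed: an index
   compared with 0 is real, which supplies the reality of b02, b20, c20 and
   of c21 / i, while Re b01 <> 0 already gives instability. *)

Section ComplexParts.
Context {R : realType}.
Local Notation Re := complex.Re.
Local Notation Im := complex.Im.
Implicit Types (x y z : R[i]) (r : R).

Lemma Re_add x y : Re (x + y) = Re x + Re y. Proof. by case: x; case: y. Qed.
Lemma Im_add x y : Im (x + y) = Im x + Im y. Proof. by case: x; case: y. Qed.
Lemma Re_opp x : Re (- x) = - Re x. Proof. by case: x. Qed.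
Lemma Im_opp x : Im (- x) = - Im x. Proof. by case: x. Qed.
Lemma Re_sub x y : Re (x - y) = Re x - Re y. Proof. by rewrite Re_add Re_opp. Qed.
Lemma Im_sub x y : Im (x - y) = Im x - Im y. Proof. by rewrite Im_add Im_opp. Qed.
Lemma Re_mul x y : Re (x * y) = Re x * Re y - Im x * Im y. Proof. by case: x; case: y. Qed.
Lemma Im_mul x y : Im (x * y) = Re x * Im y + Im x * Re y. Proof. by case: x; case: y. Qed.
Lemma Re_natr n : Re (n%:R : R[i]) = n%:R. Proof. by rewrite -(rmorph_nat (real_complex R)). Qed.
Lemma Im_natr n : Im (n%:R : R[i]) = 0. Proof. by rewrite -(rmorph_nat (real_complex R)). Qed.

Lemma Re_mul_real z r : Re (z * r%:C) = Re z * r.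
Proof. by rewrite Re_mul /= mulr0 subr0. Qed.

Lemma Im_mul_real z r : Im (z * r%:C) = Im z * r.
Proof. by rewrite Im_mul /= mulr0 add0r mulrC. Qed.

Lemma normc_real r : `|r%:C| = `|r|%:C.
Proof. by rewrite normc_def /= expr0n /= addr0 sqrtr_sqr. Qed.

Lemma Re_complexE z : 'Re z = (Re z)%:C.
Proof. by rewrite ReJ_add ReE. Qed.

Lemma gtc0_parts {z} : 0 < z -> Im z = 0 /\ 0 < Re z.
Proof. by rewrite ltcE /= => /andP[/eqP -> ->]. Qed.

Lemma ltc0_parts {z} : z < 0 -> Im z = 0 /\ Re z < 0.
Proof. by rewrite ltcE /= => /andP[/eqP <- ->]. Qed.

Lemma ge0_real z : 0 <= z -> z = (Re z)%:C.
Proof. by case: z => x y; rewrite lecE /= => /andP[/eqP -> _]. Qed.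

Lemma ler_norm_Re z e : `|z| <= e%:C -> `|Re z| <= e.
Proof.
rewrite normc_def lecR; apply: le_trans.
by rewrite -sqrtr_sqr ler_wsqrtr // lerDl sqr_ge0.
Qed.

Lemma ler_norm_Im z e : `|z| <= e%:C -> `|Im z| <= e.
Proof.
rewrite normc_def lecR; apply: le_trans.
by rewrite -sqrtr_sqr ler_wsqrtr // lerDr sqr_ge0.
Qed.

End ComplexParts.

Section QuadraticRoots.
Context {R : rcfType}.
Local Notation Re := complex.Re.
Local Notation Im := complex.Im.

Definition hurwitz_det (br bi cr ci : R) := br ^+ 2 * cr + br * bi * ci - ci ^+ 2.

Lemma complex_vieta (b c : R[i]) : exists l1 l2, b = - (l1 + l2) /\ c = l1 * l2.
Proof.
have n2 : (2 : R[i]) != 0 by rewrite pnatr_eq0.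
pose d := sqrtc (b ^+ 2 - 4 * c).
exists ((- b + d) / 2), ((- b - d) / 2); split; first by field.
have -> : (- b + d) / 2 * ((- b - d) / 2) = (b ^+ 2 - d ^+ 2) / 4 by field.
by rewrite sqr_sqrtc; field.
Qed.

Lemma quadratic_root_Re_gt0 (b c : R[i]) :
  Re b < 0 \/ hurwitz_det (Re b) (Im b) (Re c) (Im c) < 0 ->
  exists l, l ^+ 2 + b * l + c = 0 /\ 0 < Re l.
Proof.
have [l1 [l2 [-> ->]]] := complex_vieta b c; move=> Hbc.
have [Rel1|Rel1] := ltrP 0 (Re l1); first by exists l1; split => //; ring.
have [Rel2|Rel2] := ltrP 0 (Re l2); first by exists l2; split => //; ring.
exfalso; move: Hbc Rel1 Rel2; case: l1 => x1 y1; case: l2 => x2 y2 /=.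
have -> : hurwitz_det (- (x1 + x2)) (- (y1 + y2)) (x1 * x2 - y1 * y2) (x1 * y2 + y1 * x2)
          = x1 * x2 * ((x1 + x2) ^+ 2 + (y1 - y2) ^+ 2) by rewrite /hurwitz_det; ring.
move=> + x1_le0 x2_le0; have : 0 <= x1 * x2 * ((x1 + x2) ^+ 2 + (y1 - y2) ^+ 2).
  by rewrite mulr_ge0 ?addr_ge0 ?sqr_ge0 ?mulr_le0.
lra.
Qed.

End QuadraticRoots.

Section LinearLimits.
Context {R : realFieldType}.
Implicit Types (f g u v : R -> R) (l m : R).

(* [f t = l + O(t)] as [t -> 0+]; this quantitative form is what the power
   series estimates deliver. *)
Definition lim0 f l := exists K t0 : R,
  [/\ 0 <= K, 0 < t0 & forall t, 0 < t -> t <= t0 -> `|f t - l| <= K * t].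

Lemma lim0_cst l : lim0 (fun=> l) l.
Proof. by exists 0, 1; split=> // t _ _; rewrite subrr normr0 mul0r. Qed.

Lemma lim0_id : lim0 id 0.
Proof. by exists 1, 1; split=> // t t_gt0 _; rewrite subr0 mul1r gtr0_norm. Qed.

Lemma lim0N {f l} : lim0 f l -> lim0 (fun t => - f t) (- l).
Proof.
move=> [K [t0 [K0 t00 Hf]]]; exists K, t0; split=> // t t_gt0 tt0.
by rewrite -opprD normrN Hf.
Qed.

Lemma lim0D {f g l m} : lim0 f l -> lim0 g m -> lim0 (fun t => f t + g t) (l + m).
Proof.
move=> [K1 [t1 [K10 t10 Hf]]] [K2 [t2 [K20 t20 Hg]]].
exists (K1 + K2), (Num.min t1 t2); split; [exact: addr_ge0 | by rewrite lt_min t10 |].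
move=> t t_gt0; rewrite le_min => /andP[tt1 tt2].
rewrite opprD addrACA mulrDl; apply: le_trans (ler_normD _ _) _.
exact: lerD (Hf t _ _) (Hg t _ _).
Qed.

Lemma lim0M {f g l m} : lim0 f l -> lim0 g m -> lim0 (fun t => f t * g t) (l * m).
Proof.
move=> [K1 [t1 [K10 t10 Hf]]] [K2 [t2 [K20 t20 Hg]]].
have g_bound t : 0 < t -> t <= t2 -> `|g t| <= `|m| + K2 * t2.
  move=> t_gt0 tt2; rewrite -[g t](subrK m) addrC.
  apply: le_trans (ler_normD _ _) _; rewrite lerD //.
  by apply: le_trans (Hg t _ _) _; rewrite ?ler_wpM2l.
exists (K1 * (`|m| + K2 * t2) + `|l| * K2), (Num.min t1 t2); split.
- by rewrite addr_ge0 ?mulr_ge0 ?addr_ge0 ?mulr_ge0 // ltW.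
- by rewrite lt_min t10.
move=> t t_gt0; rewrite le_min => /andP[tt1 tt2].
have -> : f t * g t - l * m = (f t - l) * g t + l * (g t - m) by ring.
apply: le_trans (ler_normD _ _) _; rewrite !normrM mulrDl.
apply: lerD; last by rewrite -mulrA ler_wpM2l ?Hg.
by rewrite mulrAC ler_pM ?g_bound ?Hf.
Qed.

Lemma lim0_lt0 {f l} : lim0 f l -> l < 0 -> forall r, 0 < r -> exists2 t, 0 < t < r & f t < 0.
Proof.
move=> [K [t0 [K0 t00 Hf]]] l_lt0 r r_gt0.
pose t := Num.min (Num.min t0 (r / 2)) (- l / (K + 1)).
have K1_gt0 : 0 < K + 1 by rewrite ltr_wpDl.
have t_gt0 : 0 < t by rewrite !lt_min t00 !divr_gt0 ?oppr_gt0.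
have tr : t < r.
  by apply: le_lt_trans (_ : r / 2 < r); rewrite ?ge_min ?lexx ?orbT // ltr_pdivrMr ?ltr_pMr ?ltr1n.
have tl : (K + 1) * t <= - l by rewrite mulrC -ler_pdivlMr // ge_min lexx orbT.
have tt0 : t <= t0 by rewrite !ge_min lexx.
have := Hf t t_gt0 tt0.
by exists t; [rewrite t_gt0 | move: (ler_norm (f t - l)); lra].
Qed.

Lemma lim0_div_expn {u v} {L K K' t0 : R} {d n : nat} :
  (d < n)%N -> 0 <= K -> 0 <= K' -> 0 < t0 ->
  (forall t, 0 < t -> t <= t0 -> `|u t - v t| <= K * t ^+ n) ->
  (forall t, 0 < t -> `|v t - L * t ^+ d| <= K' * t ^+ d.+1) ->
  lim0 (fun t => u t / t ^+ d) L.
Proof.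
move=> dn K0 K'0 t00 Huv Hv; exists (K + K'), (Num.min t0 1).
split; [exact: addr_ge0 | by rewrite lt_min t00 ltr01 |].
move=> t t_gt0; rewrite le_min => /andP[tt0 t1].
have td_gt0 : 0 < t ^+ d by rewrite exprn_gt0.
have -> : u t / t ^+ d - L = ((u t - v t) + (v t - L * t ^+ d)) / t ^+ d.
  by field; rewrite gt_eqF.
rewrite normrM normfV (gtr0_norm td_gt0) ler_pdivrMr // -mulrA -exprS mulrDl.
apply: le_trans (ler_normD _ _) _; apply: lerD; last exact: Hv.
apply: le_trans (Huv t t_gt0 tt0) _.
by apply: ler_wpM2l => //; apply: ler_wiXn2l => //; exact: ltW.
Qed.

End LinearLimits.

Lemma ler_sum_term {T : numDomainType} {I : finType} (F : I -> T) (i0 : I) :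
  (forall i, 0 <= F i) -> F i0 <= \sum_i F i.
Proof. by move=> F_ge0; rewrite (bigD1 i0) //= lerDl sumr_ge0. Qed.

Lemma sum_halfX_le2 (T : realFieldType) (N : nat) : \sum_(i < N) (2^-1 : T) ^+ i <= 2.
Proof.
have : 0 <= (2^-1 : T) ^+ N by apply: exprn_ge0; rewrite invr_ge0.
have := subrX1 (2^-1 : T) N; lra.
Qed.

Section PowerSeries.
Context {R : realType}.
Local Notation C := R[i].
Implicit Types (a : nat -> nat -> C) (f : C -> C -> C) (x y : C).

Definition trunc2 a n x y := ps2 (fun j k => if (j + k < n)%N then a j k else 0) n x y.

Lemma ps2_widen a n N x y : (n <= N)%N -> (forall j k, (n <= j + k)%N -> a j k = 0) ->
  ps2 a N x y = ps2 a n x y.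
Proof.
move=> nN a0; have term0 j k : (n <= j)%N || (n <= k)%N -> a j k * x ^+ j * y ^+ k = 0.
  move=> njk; rewrite a0 ?mul0r //.
  by case/orP: njk => /leq_trans; apply; [exact: leq_addr | exact: leq_addl].
rewrite /ps2 (big_ord_widen N (fun j => \sum_(k < n) a j k * x ^+ j * y ^+ k) nN).
rewrite [RHS]big_mkcond; apply: eq_bigr => j _ /=.
case: ltnP => [jn|nj]; last by rewrite big1 // => k _; rewrite term0 ?nj.
rewrite (big_ord_widen N (fun k => a j k * x ^+ j * y ^+ k) nN) [RHS]big_mkcond.
apply: eq_bigr => k _ /=.
by case: ltnP => // nk; rewrite term0 ?nk ?orbT.
Qed.

Lemma ps2_sub_trunc2 a n N x y : (n <= N)%N ->
  ps2 a N x y - trunc2 a n x y = ps2 (fun j k => if (j + k < n)%N then 0 else a j k) N x y.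
Proof.
move=> nN; rewrite /trunc2 -(ps2_widen _ n N x y nN); last by move=> j k; rewrite ltnNge => ->.
rewrite /ps2 -sumrB; apply: eq_bigr => j _; rewrite -sumrB; apply: eq_bigr => k _.
by rewrite -!mulrBl; case: ifP; rewrite ?subrr ?subr0.
Qed.

Lemma has_ps2_coef_bound a f rho : has_ps2 a f rho ->
  exists M r : R, [/\ 0 <= M, 0 < r, r%:C < rho &
    forall j k, `|a j k| * (r ^+ (j + k))%:C <= M%:C].
Proof.
move=> [rho_gt0 Hf]; pose r := complex.Re rho / 2.
have rho_real := ge0_real _ (ltW rho_gt0).
have Rerho_gt0 : 0 < complex.Re rho by move: rho_gt0; rewrite ltcE => /andP[].
have r_gt0 : 0 < r by rewrite divr_gt0.
have r_lt : r%:C < rho by rewrite [rho]rho_real ltcR ltr_pdivrMr // ltr_pMr ?ltr1n.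
have r_in : `|r%:C| < rho by rewrite normc_real gtr0_norm.
have [[M HM] _] := Hf _ _ r_in r_in.
have M_ge0 : 0 <= M by apply: le_trans (HM 0%N); rewrite /abs2 big_ord0.
exists (complex.Re M), r; split=> //; first by rewrite -ler0c -ge0_real.
move=> j k; rewrite -ge0_real //; apply: le_trans (HM (j + k).+1).
have jlt : (j < (j + k).+1)%N by rewrite ltnS leq_addr.
have klt : (k < (j + k).+1)%N by rewrite ltnS leq_addl.
have nonneg (i i' : nat) : 0 <= `|a i i'| * `|r%:C| ^+ i * `|r%:C| ^+ i'.
  by rewrite !mulr_ge0 ?exprn_ge0.
rewrite /abs2; apply: le_trans _ (ler_sum_term _ (Ordinal jlt) _) => /= [|i].
  apply: le_trans _ (ler_sum_term _ (Ordinal klt) _) => //=.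
  by rewrite normc_real (gtr0_norm r_gt0) -mulrA -exprD rmorphXn.
by apply: sumr_ge0 => i' _; exact: nonneg.
Qed.

Lemma ps2_tail_le a n N (M r s : R) x y : 0 < r -> 0 <= s -> 2 * s <= r ->
  (forall j k, `|a j k| * (r ^+ (j + k))%:C <= M%:C) -> `|x| <= s%:C -> `|y| <= s%:C ->
  `|ps2 (fun j k => if (j + k < n)%N then 0 else a j k) N x y|
    <= (4 * M * (2 * s / r) ^+ n)%:C.
Proof.
move=> r_gt0 s_ge0 sr aM xs ys; pose q := 2 * s / r; pose h : R := 2^-1.
have M_ge0 : 0 <= M by rewrite -lecR (le_trans _ (aM 0%N 0%N)) ?mulr_ge0.
have q_ge0 : 0 <= q by rewrite /q divr_ge0 ?mulr_ge0 // ltW.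
have q_le1 : q <= 1 by rewrite /q ler_pdivrMr ?mul1r.
have h_ge0 : 0 <= h by rewrite invr_ge0.
have pow_le (z : C) i : `|z| <= s%:C -> `|z| ^+ i <= s%:C ^+ i.
  by move=> zs; apply: lerXn2r; rewrite // nnegrE ?normr_ge0 ?ler0c.
have term j k : `|(if (j + k < n)%N then 0 else a j k) * x ^+ j * y ^+ k|
    <= (M * q ^+ n * (h ^+ j * h ^+ k))%:C.
  case: ltnP => [_|njk]; first by rewrite !mul0r normr0 ler0c !mulr_ge0 ?exprn_ge0.
  rewrite !normrM !normrX; apply: (@le_trans _ _ (`|a j k| * s%:C ^+ (j + k))).
    rewrite exprD mulrA; apply: ler_pM; rewrite ?mulr_ge0 ?exprn_ge0 ?pow_le //.
    exact: ler_wpM2l (pow_le _ _ xs).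
  have -> : s%:C ^+ (j + k) = (r ^+ (j + k))%:C * ((q * h) ^+ (j + k))%:C.
    by rewrite -rmorphM -exprMn -rmorphXn /q /h; congr (_ ^+ _)%:C; field; rewrite gt_eqF.
  have qh_ge0 : 0 <= ((q * h) ^+ (j + k))%:C by rewrite ler0c; apply/exprn_ge0/mulr_ge0.
  rewrite [leLHS]mulrA; apply: le_trans (ler_wpM2r qh_ge0 (aM j k)) _.
  rewrite -rmorphM lecR -mulrA; apply: ler_wpM2l => //.
  by rewrite exprMn -exprD; apply: ler_wpM2r; [exact: exprn_ge0 | exact: ler_wiXn2l].
apply: le_trans (ler_norm_sum _ _ _) _.
apply: (@le_trans _ _ (\sum_(j < N) \sum_(k < N) (M * q ^+ n * (h ^+ j * h ^+ k))%:C)).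
  apply: ler_sum => j _; apply: le_trans (ler_norm_sum _ _ _) _.
  by apply: ler_sum => k _; exact: term.
under eq_bigr do rewrite -rmorph_sum.
rewrite -rmorph_sum lecR -/q; under eq_bigr do rewrite -mulr_sumr.
rewrite -mulr_sumr -big_distrlr /= -/h (_ : 4 * M * q ^+ n = M * q ^+ n * (2 * 2)); last by ring.
apply: ler_wpM2l; first by rewrite mulr_ge0 ?exprn_ge0.
by apply: ler_pM; rewrite ?sum_halfX_le2 ?sumr_ge0 // => i _; rewrite exprn_ge0.
Qed.

Lemma cvgC_dist_le (u : nat -> C) (l T B : C) (n : nat) :
  cvgC u l -> (forall N, (n <= N)%N -> `|u N - T| <= B) -> `|l - T| <= B.
Proof.
move=> ul uB; apply/ler_addgt0Pr => e e_gt0; have [N0 HN0] := ul e e_gt0.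
pose N := maxn N0 n; rewrite -(subrK (u N) l) -addrA addrC.
apply: le_trans (ler_normD _ _) _; apply: lerD; first exact: uB (leq_maxr _ _).
by rewrite distrC ltW // HN0 // leq_maxl.
Qed.

Lemma has_ps2_trunc2_bound a f rho : has_ps2 a f rho ->
  exists M r : R, [/\ 0 <= M, 0 < r & forall n (s : R) x y, 0 <= s -> 2 * s <= r ->
    `|x| <= s%:C -> `|y| <= s%:C -> `|f x y - trunc2 a n x y| <= (4 * M * (2 * s / r) ^+ n)%:C].
Proof.
move=> Hf; have [M [r [M_ge0 r_gt0 r_lt aM]]] := has_ps2_coef_bound _ _ _ Hf.
exists M, r; split=> // n s x y s_ge0 sr xs ys.
have s_lt : s%:C < rho.
  by apply: le_lt_trans r_lt; rewrite lecR; move: sr s_ge0; lra.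
have [_ Hcvg] := Hf.2 x y (le_lt_trans xs s_lt) (le_lt_trans ys s_lt).
apply: (cvgC_dist_le _ _ _ _ n Hcvg) => N nN.
by rewrite ps2_sub_trunc2 //; apply: ps2_tail_le.
Qed.

Lemma has_ps2_line_expansion a f rho n (X Y : R) : has_ps2 a f rho ->
  exists K t0 : R, [/\ 0 <= K, 0 < t0 & forall t, 0 < t -> t <= t0 ->
    `|f (t * X)%:C (t * Y)%:C - trunc2 a n (t * X)%:C (t * Y)%:C| <= (K * t ^+ n)%:C].
Proof.
move=> Hf; have [M [r [M_ge0 r_gt0 Hbound]]] := has_ps2_trunc2_bound _ _ _ Hf.
pose A := `|X| + `|Y| + 1; have := normr_ge0 X; have := normr_ge0 Y.
move=> Y_ge0 X_ge0; have XA : `|X| <= A by rewrite /A; lra.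
have YA : `|Y| <= A by rewrite /A; lra.
have A_gt0 : 0 < A by rewrite /A; lra.
exists (4 * M * (2 * A / r) ^+ n), (r / (2 * A)); split.
- by rewrite !mulr_ge0 // exprn_ge0 // divr_ge0 // ?mulr_ge0 // ltW.
- by rewrite divr_gt0 ?mulr_gt0.
move=> t t_gt0 tt0; have line_le (Z : R) : `|Z| <= A -> `|(t * Z)%:C| <= (A * t)%:C.
  move=> ZA; rewrite normc_real lecR normrM (gtr0_norm t_gt0) [A * t]mulrC.
  by apply: ler_wpM2l => //; exact: ltW.
have -> : 4 * M * (2 * A / r) ^+ n * t ^+ n = 4 * M * (2 * (A * t) / r) ^+ n.
  by rewrite -mulrA -exprMn; congr (_ * _ ^+ _); ring.
apply: Hbound; rewrite ?line_le //; first by rewrite mulr_ge0 // ltW.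
by move: tt0; rewrite ler_pdivlMr ?mulr_gt0 // => tA; lra.
Qed.

Lemma lim0_Re_div_expn {z w : R -> C} {L K' : R} {d n : nat} : (d < n)%N -> 0 <= K' ->
  (exists K t0 : R, [/\ 0 <= K, 0 < t0 & forall t, 0 < t -> t <= t0 ->
     `|z t - w t| <= (K * t ^+ n)%:C]) ->
  (forall t, 0 < t -> `|complex.Re (w t) - L * t ^+ d| <= K' * t ^+ d.+1) ->
  lim0 (fun t => complex.Re (z t) / t ^+ d) L.
Proof.
move=> dn K'_ge0 [K [t0 [K_ge0 t0_gt0 Hzw]]] Hw.
apply: (lim0_div_expn dn K_ge0 K'_ge0 t0_gt0 _ Hw) => t t_gt0 tt0.
by rewrite -Re_sub; apply/ler_norm_Re/Hzw.
Qed.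

Lemma lim0_Im_div_expn {z w : R -> C} {L K' : R} {d n : nat} : (d < n)%N -> 0 <= K' ->
  (exists K t0 : R, [/\ 0 <= K, 0 < t0 & forall t, 0 < t -> t <= t0 ->
     `|z t - w t| <= (K * t ^+ n)%:C]) ->
  (forall t, 0 < t -> `|complex.Im (w t) - L * t ^+ d| <= K' * t ^+ d.+1) ->
  lim0 (fun t => complex.Im (z t) / t ^+ d) L.
Proof.
move=> dn K'_ge0 [K [t0 [K_ge0 t0_gt0 Hzw]]] Hw.
apply: (lim0_div_expn dn K_ge0 K'_ge0 t0_gt0 _ Hw) => t t_gt0 tt0.
by rewrite -Im_sub; apply/ler_norm_Im/Hzw.
Qed.

End PowerSeries.

Section Instability.
Context {R : realType}.
Local Notation Re := complex.Re.
Local Notation Im := complex.Im.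
Variables b c : R[i] -> R[i] -> R[i].

Definition unstable_near0 := forall r : R, 0 < r ->
  exists eta xi : R, 0 < `|eta| + `|xi| /\ `|eta| + `|xi| < r /\
    exists l : R[i], Wpoly b c l eta%:C xi%:C = 0 /\ 0 < 'Re l.

Lemma unstable_along_line {X Y : R} : 0 < `|X| + `|Y| ->
  (forall s, 0 < s -> exists2 t, 0 < t < s &
     exists l, Wpoly b c l (t * X)%:C (t * Y)%:C = 0 /\ 0 < Re l) ->
  unstable_near0.
Proof.
move=> XY_gt0 Hline r r_gt0.
have [t /andP[t_gt0 tr] [l [Wl Rel]]] := Hline _ (divr_gt0 r_gt0 XY_gt0).
have norm_line : `|t * X| + `|t * Y| = t * (`|X| + `|Y|).
  by rewrite !normrM (gtr0_norm t_gt0) mulrDr.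
exists (t * X), (t * Y); rewrite norm_line mulr_gt0 //; split=> //.
split; first by rewrite -ltr_pdivlMr.
by exists l; rewrite Re_complexE ltcR.
Qed.

Lemma unstable_of_Re_b {X Y L : R} {d : nat} : 0 < `|X| + `|Y| ->
  lim0 (fun t => Re (b (t * X)%:C (t * Y)%:C) / t ^+ d) L -> L < 0 -> unstable_near0.
Proof.
move=> XY_gt0 HL L_lt0; apply: (unstable_along_line XY_gt0) => s s_gt0.
have [t t_in Ht] := lim0_lt0 HL L_lt0 _ s_gt0; exists t => //.
apply: quadratic_root_Re_gt0; left.
by move: Ht; rewrite pmulr_llt0 // invr_gt0 exprn_gt0 //; case/andP: t_in.
Qed.

Lemma lim0_hurwitz_det {f1 f2 f3 f4 : R -> R} {l1 l2 l3 l4 : R} :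
  lim0 f1 l1 -> lim0 f2 l2 -> lim0 f3 l3 -> lim0 f4 l4 ->
  lim0 (fun t => hurwitz_det (f1 t) (f2 t) (f3 t) (f4 t)) (hurwitz_det l1 l2 l3 l4).
Proof.
move=> H1 H2 H3 H4; rewrite /hurwitz_det !expr2.
exact: lim0D (lim0D (lim0M (lim0M H1 H1) H3) (lim0M (lim0M H1 H2) H4)) (lim0N (lim0M H4 H4)).
Qed.

(* With [Re b ~ t^k], [Im b ~ t^j], [Re c ~ t^(2j)], [Im c ~ t^(k+j)], all
   three monomials of the Hurwitz determinant have order [t^(2(k+j))]. *)
Lemma unstable_of_hurwitz_det {X Y Br Bi Cr Ci : R} {k j : nat} : 0 < `|X| + `|Y| ->
  lim0 (fun t => Re (b (t * X)%:C (t * Y)%:C) / t ^+ k) Br ->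
  lim0 (fun t => Im (b (t * X)%:C (t * Y)%:C) / t ^+ j) Bi ->
  lim0 (fun t => Re (c (t * X)%:C (t * Y)%:C) / t ^+ (j + j)) Cr ->
  lim0 (fun t => Im (c (t * X)%:C (t * Y)%:C) / t ^+ (k + j)) Ci ->
  hurwitz_det Br Bi Cr Ci < 0 -> unstable_near0.
Proof.
move=> XY_gt0 HBr HBi HCr HCi H_lt0; apply: (unstable_along_line XY_gt0) => s s_gt0.
have [t t_in Ht] := lim0_lt0 (lim0_hurwitz_det HBr HBi HCr HCi) H_lt0 _ s_gt0.
exists t => //; apply: quadratic_root_Re_gt0; right; move: Ht.
have [t_gt0 _] := andP t_in; have [tk_gt0 tj_gt0] := (exprn_gt0 k t_gt0, exprn_gt0 j t_gt0).
set rb := Re _; set ib := Im _; set rc := Re _; set ic := Im _.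
have -> : hurwitz_det (rb / t ^+ k) (ib / t ^+ j) (rc / t ^+ (j + j)) (ic / t ^+ (k + j))
          = hurwitz_det rb ib rc ic / (t ^+ k * t ^+ j) ^+ 2.
  by rewrite /hurwitz_det !exprD; field; rewrite !gt_eqF.
by rewrite pmulr_llt0 // invr_gt0 exprn_gt0 // mulr_gt0.
Qed.

End Instability.

Section TaylorData.
Context {R : realType}.
Local Notation Re := complex.Re.
Local Notation Im := complex.Im.
Context {b c : R[i] -> R[i] -> R[i]} {bc cc : nat -> nat -> R[i]} {rhob rhoc : R[i]}.
Hypotheses (Hb : has_ps2 bc b rhob) (Hc : has_ps2 cc c rhoc).
Hypotheses (bc00 : bc 0 0 = 0) (bc10 : bc 1 0 = 0) (bc11 : bc 1 1 = 0).
Hypotheses (cc_lt2 : forall j k, (j < 2)%N -> cc j k = 0) (cc30 : cc 3 0 = 0).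

Lemma trunc2_b x y : trunc2 bc 3 x y = bc 0 1 * y + bc 0 2 * y ^+ 2 + bc 2 0 * x ^+ 2.
Proof.
rewrite /trunc2 /ps2 !big_ord_recr !big_ord0 /= bc00 bc10 bc11.
by rewrite !expr0 !expr1 !mulr1 !mul0r !add0r ?addr0.
Qed.

Lemma trunc2_c x y : trunc2 cc 4 x y = (cc 2 0 + cc 2 1 * y) * x ^+ 2.
Proof.
rewrite /trunc2 /ps2 !big_ord_recr !big_ord0 /= !(cc_lt2 0) // !(cc_lt2 1) // cc30.
by rewrite !expr0 !expr1 !mulr1 !mul0r !add0r ?addr0; ring.
Qed.

Let b_line X Y := has_ps2_line_expansion _ _ _ 3 X Y Hb.
Let c_line X Y := has_ps2_line_expansion _ _ _ 4 X Y Hc.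

Lemma lim0_Re_b1 X Y :
  lim0 (fun t => Re (b (t * X)%:C (t * Y)%:C) / t ^+ 1) (Re (bc 0 1) * Y).
Proof.
pose K' := `|Re (bc 0 2) * Y ^+ 2 + Re (bc 2 0) * X ^+ 2|.
apply: (lim0_Re_div_expn _ (normr_ge0 _ : 0 <= K') (b_line X Y)) => // t t_gt0.
rewrite trunc2_b -!rmorphXn !Re_add !Re_mul_real.
rewrite [E in `|E|](_ : _ = (Re (bc 0 2) * Y ^+ 2 + Re (bc 2 0) * X ^+ 2) * t ^+ 2).
  by rewrite normrM normrX (gtr0_norm t_gt0).
by ring.
Qed.

Lemma lim0_Re_b2 X Y : Re (bc 0 1) * Y = 0 ->
  lim0 (fun t => Re (b (t * X)%:C (t * Y)%:C) / t ^+ 2)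
       (Re (bc 0 2) * Y ^+ 2 + Re (bc 2 0) * X ^+ 2).
Proof.
move=> b01Y; apply: (lim0_Re_div_expn _ (lexx 0) (b_line X Y)) => // t t_gt0.
rewrite trunc2_b -!rmorphXn !Re_add !Re_mul_real mul0r.
rewrite [E in `|E|](_ : _ = Re (bc 0 1) * Y * t); last by ring.
by rewrite b01Y mul0r normr0.
Qed.

Lemma lim0_Im_b1 X Y :
  lim0 (fun t => Im (b (t * X)%:C (t * Y)%:C) / t ^+ 1) (Im (bc 0 1) * Y).
Proof.
pose K' := `|Im (bc 0 2) * Y ^+ 2 + Im (bc 2 0) * X ^+ 2|.
apply: (lim0_Im_div_expn _ (normr_ge0 _ : 0 <= K') (b_line X Y)) => // t t_gt0.
rewrite trunc2_b -!rmorphXn !Im_add !Im_mul_real.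
rewrite [E in `|E|](_ : _ = (Im (bc 0 2) * Y ^+ 2 + Im (bc 2 0) * X ^+ 2) * t ^+ 2).
  by rewrite normrM normrX (gtr0_norm t_gt0).
by ring.
Qed.

Lemma lim0_Re_c2 X Y :
  lim0 (fun t => Re (c (t * X)%:C (t * Y)%:C) / t ^+ 2) (Re (cc 2 0) * X ^+ 2).
Proof.
apply: (lim0_Re_div_expn _ (normr_ge0 (Re (cc 2 1) * Y * X ^+ 2)) (c_line X Y)) => // t t_gt0.
rewrite trunc2_c -!rmorphXn Re_mul_real Re_add Re_mul_real.
rewrite [E in `|E|](_ : _ = Re (cc 2 1) * Y * X ^+ 2 * t ^+ 3).
  by rewrite normrM normrX (gtr0_norm t_gt0).
by ring.
Qed.

Lemma lim0_Im_c3 X Y : Im (cc 2 0) = 0 ->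
  lim0 (fun t => Im (c (t * X)%:C (t * Y)%:C) / t ^+ 3) (Im (cc 2 1) * Y * X ^+ 2).
Proof.
move=> c20_real; apply: (lim0_Im_div_expn _ (lexx 0) (c_line X Y)) => // t t_gt0.
rewrite trunc2_c -!rmorphXn Im_mul_real Im_add Im_mul_real c20_real mul0r.
by rewrite [E in `|E|](_ : _ = 0) ?normr0 //; ring.
Qed.

Lemma unstable_Re_b01 : Re (bc 0 1) != 0 -> unstable_near0 b c.
Proof.
move=> b01_neq0; have L_lt0 : Re (bc 0 1) * - Re (bc 0 1) < 0.
  by rewrite mulrN oppr_lt0 -expr2 lt_def sqrf_eq0 b01_neq0 sqr_ge0.
apply: (unstable_of_Re_b b c _ (lim0_Re_b1 0 _) L_lt0).
by rewrite normr0 add0r normrN normr_gt0.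
Qed.

Lemma unstable_Re_b02 : Re (bc 0 1) = 0 -> Re (bc 0 2) < 0 -> unstable_near0 b c.
Proof.
move=> b01_0 b02_lt0; have := lim0_Re_b2 0 1.
rewrite b01_0 mul0r expr1n mulr1 expr0n mulr0 addr0.
by move/(_ erefl)/(unstable_of_Re_b b c); apply; rewrite ?normr0 ?normr1 ?add0r.
Qed.

Lemma unstable_Re_b20 : Re (bc 2 0) < 0 -> unstable_near0 b c.
Proof.
move=> b20_lt0; have := lim0_Re_b2 1 0; rewrite mulr0 expr0n mulr0 add0r expr1n mulr1.
by move/(_ erefl)/(unstable_of_Re_b b c); apply; rewrite ?normr0 ?normr1 ?addr0.
Qed.

Lemma unstable_hurwitz_line (m : R) : 0 < m -> Re (bc 0 1) = 0 -> Im (cc 2 0) = 0 ->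
  hurwitz_det (Re (bc 0 2) + Re (bc 2 0) * m) (Im (bc 0 1))
              (Re (cc 2 0) * m) (Im (cc 2 1) * m) < 0 ->
  unstable_near0 b c.
Proof.
move=> m_gt0 b01_0 c20_real; pose X := Num.sqrt m.
have X2 : X ^+ 2 = m by rewrite sqr_sqrtr // ltW.
have HBr := lim0_Re_b2 X 1; rewrite b01_0 mul0r expr1n mulr1 X2 in HBr.
have HBi := lim0_Im_b1 X 1; rewrite mulr1 in HBi.
have HCr := lim0_Re_c2 X 1; rewrite X2 in HCr.
have HCi := lim0_Im_c3 X 1 c20_real; rewrite mulr1 X2 in HCi.
apply: (unstable_of_hurwitz_det b c _ (HBr erefl) HBi HCr HCi).
by rewrite normr1 ltr_wpDl.
Qed.

End TaylorData.

Lemma quadratic_lt0_pos (R : realFieldType) (a b0 c0 : R) : 0 < a ->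
  c0 < 0 \/ (b0 <= 0 /\ 0 < b0 ^+ 2 - 4 * a * c0) ->
  exists2 m, 0 < m & a * m ^+ 2 + b0 * m + c0 < 0.
Proof.
move=> a_gt0 Hcase; have [c0_lt0|c0_ge0] := ltP c0 0.
  have := lim0D (lim0D (lim0M (lim0_cst a) (lim0M lim0_id lim0_id))
                       (lim0M (lim0_cst b0) lim0_id)) (lim0_cst c0).
  rewrite !mulr0 !add0r => /lim0_lt0/(_ c0_lt0 1 ltr01)[m /andP[m_gt0 _] Hm].
  by exists m.
have [b0_le0 disc_gt0] : b0 <= 0 /\ 0 < b0 ^+ 2 - 4 * a * c0.
  by case: Hcase => // c0_lt0; exfalso; lra.
have ac_ge0 : 0 <= 4 * a * c0 by rewrite !mulr_ge0 // ltW.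
have b0_lt0 : b0 < 0.
  rewrite lt_neqAle b0_le0 andbT; apply/eqP => b0_eq0.
  by move: disc_gt0; rewrite b0_eq0 expr0n /=; lra.
exists (- b0 / (2 * a)); first by rewrite divr_gt0 ?oppr_gt0 ?mulr_gt0.
rewrite (_ : _ + c0 = - (b0 ^+ 2 - 4 * a * c0) / (4 * a)); last by field; rewrite gt_eqF.
by rewrite mulNr oppr_lt0 divr_gt0 ?mulr_gt0.
Qed.

Section Indices.
Context {R : realType}.
Local Notation Re := complex.Re.
Local Notation Im := complex.Im.
Context {b01 b02 b20 c20 c21 : R[i]}.
Hypotheses (b01_imag : Re b01 = 0) (b02_real : Im b02 = 0) (b20_real : Im b20 = 0)
  (c20_real : Im c20 = 0).

Local Notation p := (Re b02).
Local Notation q := (Re b20).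
Local Notation beta := (Im b01).
Local Notation delta := (Im c21).
Local Notation gamma := (Re c20).
Let I4 := beta * q * delta + 2 * p * q * gamma - delta ^+ 2.
Let I5 := beta * delta + p * gamma.

Local Ltac expand_parts := rewrite ?expr2
  !(Re_add, Im_add, Re_opp, Im_opp, Re_mul, Im_mul, Re_natr, Im_natr)
  ?b01_imag ?b02_real ?b20_real ?c20_real.

Lemma Re_ind4 : Re (ind4 b01 b02 b20 c20 c21) = I4 + Re c21 ^+ 2.
Proof. by rewrite /ind4 /I4; expand_parts; ring. Qed.

Lemma Im_ind4 : Im (ind4 b01 b02 b20 c20 c21) = Re c21 * (2 * delta - beta * q).
Proof. by rewrite /ind4; expand_parts; ring. Qed.

Lemma Re_ind5 : Re (ind5 b01 b02 b20 c20 c21) = I5.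
Proof. by rewrite /ind5 /I5; expand_parts; ring. Qed.

Lemma Im_ind5 : Im (ind5 b01 b02 b20 c20 c21) = - beta * Re c21.
Proof. by rewrite /ind5; expand_parts; ring. Qed.

Lemma Re_ind3 : Re c21 = 0 ->
  Re (ind3 b01 b02 b20 c20 c21) = I4 ^+ 2 - 4 * (gamma * q ^+ 2) * (p * I5).
Proof. by move=> c21_imag; rewrite /ind3 /I4 /I5; expand_parts; rewrite c21_imag; ring. Qed.

Hypotheses (p_gt0 : 0 < p) (q_gt0 : 0 < q) (gamma_gt0 : 0 < gamma).

Lemma Re_c21_of_ind4 : ind4 b01 b02 b20 c20 c21 <= 0 -> Re c21 = 0.
Proof.
rewrite lecE /= Re_ind4 Im_ind4 => /andP[/eqP Im4 Re4].
have [//|c21_neq0] := eqVneq (Re c21) 0; exfalso.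
have : Re c21 * (2 * delta - beta * q) = 0 by rewrite -Im4.
move/eqP; rewrite mulf_eq0 (negbTE c21_neq0) subr_eq0 => /eqP e.
have : 0 < Re c21 ^+ 2 by rewrite lt_def sqrf_eq0 c21_neq0 sqr_ge0.
have : 0 < p * q * gamma by rewrite !mulr_gt0.
move: Re4; rewrite /I4 -e; have := sqr_ge0 delta; lra.
Qed.

Lemma Re_c21_of_ind5 : ind5 b01 b02 b20 c20 c21 < 0 -> Re c21 = 0.
Proof.
rewrite ltcE /= Re_ind5 Im_ind5 => /andP[/eqP Im5 Re5].
have [beta0|beta_neq0] := eqVneq beta 0.
  by move: Re5; rewrite /I5 beta0 mul0r add0r; have := mulr_gt0 p_gt0 gamma_gt0; lra.
by apply/eqP; move/eqP: Im5; rewrite eq_sym mulf_eq0 oppr_eq0 (negbTE beta_neq0).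
Qed.

Lemma exists_hurwitz_line_lt0 :
  (0 < ind3 b01 b02 b20 c20 c21 /\ ind4 b01 b02 b20 c20 c21 <= 0) \/
  ind5 b01 b02 b20 c20 c21 < 0 ->
  exists2 m, 0 < m & hurwitz_det (p + q * m) beta (gamma * m) (delta * m) < 0.
Proof.
move=> Hcase; have c21_imag : Re c21 = 0.
  by case: Hcase => [[_ /Re_c21_of_ind4]|/Re_c21_of_ind5].
have [||m m_gt0 Hm] := quadratic_lt0_pos _ (gamma * q ^+ 2) I4 (p * I5).
- by rewrite mulr_gt0 ?exprn_gt0.
- case: Hcase => [[/gtc0_parts[_ i3_gt0] i4_le0]|/ltc0_parts[_ i5_lt0]]; [right | left].
    split; last by rewrite -(Re_ind3 c21_imag).
    by move: i4_le0; rewrite lecE /= Re_ind4 c21_imag expr0n addr0 => /andP[_].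
  by rewrite pmulr_rlt0 // -Re_ind5.
exists m => //; rewrite (_ : hurwitz_det _ _ _ _ = m * (gamma * q ^+ 2 * m ^+ 2 + I4 * m + p * I5)).
  by rewrite pmulr_rlt0.
by rewrite /hurwitz_det /I4 /I5; ring.
Qed.

End Indices.

Theorem mainTheorem14 (R : realType)
  (E : R[i] -> R[i] -> R[i] -> R[i]) (a : nat -> nat -> nat -> R[i]) (rhoE : R[i])
  (h : R[i] -> R[i] -> R[i] -> R[i]) (ah : nat -> nat -> nat -> R[i]) (rhoh : R[i])
  (b c : R[i] -> R[i] -> R[i]) (bc cc : nat -> nat -> R[i]) (rhob rhoc rho : R[i]) :
  (* E analytic near 0 in C^3 with Taylor coefficients a *)
  has_ps3 a E rhoE ->
  (* a_(i,j,k) in (sqrt -1)^(j+k) R *)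
  (forall i j k : nat, exists t : R, a i j k = t%:C * iC R ^+ (j + k)) ->
  (* E(lambda,-eta,xi) = E(lambda,eta,xi) near 0 *)
  (forall l eta xi : R[i], `|l| < rhoE -> `|eta| < rhoE -> `|xi| < rhoE ->
     E l (- eta) xi = E l eta xi) ->
  (* E(0,0,xi) = 0 near 0 *)
  (forall xi : R[i], `|xi| < rhoE -> E 0 0 xi = 0) ->
  a 1%N 0%N 0%N = 0 -> a 2%N 0%N 0%N != 0 -> a 0%N 2%N 0%N != 0 ->
  (* Weierstrass factorization E = W h near the origin, h(0,0,0) <> 0 *)
  has_ps3 ah h rhoh -> h 0 0 0 != 0 ->
  has_ps2 bc b rhob -> has_ps2 cc c rhoc ->
  0 < rho ->
  (forall l eta xi : R[i], `|l| < rho -> `|eta| < rho -> `|xi| < rho ->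
     E l eta xi = Wpoly b c l eta xi * h l eta xi) ->
  (* b = b01 xi + b02 xi^2 + b20 eta^2 + O(|eta|+|xi|)^3
     (coefficient bc j k is that of eta^j xi^k) *)
  bc 0%N 0%N = 0 -> bc 1%N 0%N = 0 -> bc 1%N 1%N = 0 ->
  (* c = eta^2 (c20 + c21 xi + O(|eta|+|xi|)^2) *)
  (forall j k : nat, (j < 2)%N -> cc j k = 0) -> cc 3%N 0%N = 0 ->
  (* c20 > 0 *)
  0 < cc 2%N 0%N ->
  let b01 := bc 0%N 1%N in let b02 := bc 0%N 2%N in let b20 := bc 2%N 0%N in
  let c20 := cc 2%N 0%N in let c21 := cc 2%N 1%N in
  let i1 := ind1 b01 b02 b20 c20 c21 in
  let i2 := ind2 b01 b02 b20 c20 c21 in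
  let i3 := ind3 b01 b02 b20 c20 c21 in
  let i4 := ind4 b01 b02 b20 c20 c21 in
  let i5 := ind5 b01 b02 b20 c20 c21 in
  ((i1 < 0 \/ i2 < 0) \/
   (0 < i1 /\ 0 < i2 /\ 0 < i3 /\ i4 <= 0) \/
   (0 < i1 /\ 0 < i2 /\ 0 < i3 /\ i5 < 0)) ->
  forall r : R, 0 < r ->
    exists eta xi : R, 0 < `|eta| + `|xi| /\ `|eta| + `|xi| < r /\
      exists l : R[i], Wpoly b c l eta%:C xi%:C = 0 /\ 0 < Re l.
Proof.
move=> _ _ _ _ _ _ _ _ _ Hb Hc _ _ bc00 bc10 bc11 cc_lt2 cc30 c20_gt0.
move=> b01 b02 b20 c20 c21 i1 i2 i3 i4 i5 Hind; change (unstable_near0 b c).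
have [c20_real gamma_gt0] := gtc0_parts c20_gt0.
have [b01_imag|b01_nimag] := eqVneq (complex.Re b01) 0; last first.
  exact: unstable_Re_b01 Hb bc00 bc10 bc11 b01_nimag.
case: Hind => [[/ltc0_parts[_ b02_lt0]|/ltc0_parts[_ b20_lt0]]|Hind].
- exact: unstable_Re_b02 Hb bc00 bc10 bc11 b01_imag b02_lt0.
- exact: unstable_Re_b20 Hb bc00 bc10 bc11 b20_lt0.
have [/gtc0_parts[b02_real p_gt0] /gtc0_parts[b20_real q_gt0]] : 0 < i1 /\ 0 < i2.
  by case: Hind => -[i1_gt0 [i2_gt0 _]].
have i345 : (0 < i3 /\ i4 <= 0) \/ i5 < 0.
  by case: Hind => -[_ [_ [i3_gt0 Hi]]]; [left | right].
have [m m_gt0 Hm] :=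
  exists_hurwitz_line_lt0 b01_imag b02_real b20_real c20_real p_gt0 q_gt0 gamma_gt0 i345.
exact: unstable_hurwitz_line Hb Hc bc00 bc10 bc11 cc_lt2 cc30 m m_gt0 b01_imag c20_real Hm.
Qed.
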